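(* Fix $0<\theta<1$ and let $P_N(k)=W(N,k)/[N]_\theta!$ for $0\le k\le N-1$. Then: 1. For each fixed integer $j\ge1$, $\lim_{N\to\infty}P_N(N-j)=j\,\theta^{j-1}(1-\theta)$. 2. If $(k_N)$ is any sequence with $0\le k_N\le N-1$ and $N-k_N\to\infty$, then $P_N(k_N)\to0$. 3. The function $g(j)=j\,\theta^{j-1}(1-\theta)$ on real $j\ge1$ attains its maximum at $j^*=\max(-1/\ln\theta,\,1)$. When $1/e<\theta<1$, the maximum value is $g(j^* )=e^{-1}\,\dfrac{\theta-1}{\theta\ln\theta}$.
   Context: Permutations of $\{1,\dots,N\}$ are written in one-line notation; $\mathfrak S_N$ is the set of all of them. An entry $\pi_j$ is a left-to-right maximum if $\pi_j>\pi_i$ for all $i<j$; $\mathrm{inv}(\pi)$ is the number of pairs $i<j$ with $\pi_i>\pi_j$. Definitions: - $[m]_\theta=1+\theta+\cdots+\theta^{m-1}$ and $[m]_\theta!=[1]_\theta\cdots[m]_\theta$; note $[N]_\theta!=\sum_{\pi\in\mathfrak S_N}\theta^{\mathrm{inv}(\pi)}$. - For $0\le k\le N-1$, $\pi\in\mathfrak S_N$ is $k$-winnable if the first index $j>k$ with $\pi_j$ a left-to-right maximum has $\pi_j=N$. - $W(N,k)=\sum_{k\text{-winnable }\pi}\theta^{\mathrm{inv}(\pi)}$. Thus $P_N(k)$ is the probability of winning the best choice game under the Mallows distribution, in which $\pi\in\mathfrak S_N$ has probability $\theta^{\mathrm{inv}(\pi)}/[N]_\theta!$. The game is played with the positional strategy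 that rejects the first $k$ candidates and accepts the next left-to-right maximum; winning means the accepted candidate $i$ has $\pi_i=N$. *)

From mathcomp Require Import all_boot all_fingroup.
From Stdlib Require Import Reals.

Set Implicit Arguments.
Unset Strict Implicit.
Unset Printing Implicit Defensive.

(* Permutations of {1,...,N} are modelled as s : 'S_N (permutations of
   'I_N = {0,...,N-1}); position j (1-based) is position j-1 here and value v
   is v-1 here.  This shift preserves inversions, left-to-right maxima and
   "the entry equals the maximum N". *)

Definition lrmax (N : nat) (s : 'S_N) (j : 'I_N) : bool :=
  [forall i : 'I_N, (i < j)%N ==> (s i < s j)%N].

Definition inv (N : nat) (s : 'S_N) : nat :=
  #|[set p : 'I_N * 'I_N | (p.1 < p.2)%N && (s p.2 < s p.1)%N]|.

(* k-winnable: the first (1-based) index j > k, i.e. 0-based index >= k,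
   which is a left-to-right maximum carries the maximal value. *)
Definition winnable (N k : nat) (s : 'S_N) : bool :=
  [exists j : 'I_N,
    [&& (k <= j)%N, lrmax s j, nat_of_ord (s j) == N.-1 &
        [forall i : 'I_N, ((k <= i)%N && (i < j)%N) ==> ~~ lrmax s i]]].

Definition W (N k : nat) (theta : R) : R :=
  \big[Rplus/0%R]_(s : 'S_N | winnable k s) (theta ^ inv s)%R.

Definition qint (m : nat) (theta : R) : R :=
  \big[Rplus/0%R]_(i < m) (theta ^ i)%R.

Definition qfact (N : nat) (theta : R) : R :=
  \big[Rmult/1%R]_(1 <= m < N.+1) qint m theta.

Definition P (N k : nat) (theta : R) : R := (W N k theta / qfact N theta)%R.

(* Every permutation of 'I_n.+1 is [lift_perm ord_max v s] for
   a unique last value v and s : 'S_n.  Appending v adds n - v inversions,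
   does not change which earlier entries are left-to-right maxima, and is
   itself a left-to-right maximum iff v is maximal.  A permutation is
   k-winnable iff it has exactly one left-to-right maximum at positions >= k.
   Hence the θ^inv-weighted counts A_t(n) of permutations with t such maxima
   satisfy A_0(n+1) = θ·[n] A_0(n), A_1(n+1) = θ·[n] A_1(n) + A_0(n), with
   A_0(k) = [k]!, A_1(k) = 0, and Σ_s θ^inv(s) = [n]!.

   Dividing by [n+1]! = [n]! [n+1] gives, for j = n - k, a linear
   recursion with coefficients ρ_m = θ·[m]/[m+1] → θ and σ_m = 1/[m+1] → 1-θ.
   By induction on j, the normalized counts satisfy p_none k j → θ^j and
   p_one k (j+1) → (j+1)θ^j(1-θ) as k → ∞ (part 1), and p_one k (j+1) <=
   (j+1)θ^j uniformly in k, which tends to 0 (part 2).  Part 3 is calculus: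
   g(x) = x e^(-c(x-1)) (1-θ) with c = -ln θ, maximized using e^y >= 1 + y. *)

From Pilot Require Import Defs.
From Coquelicot Require Rbar Lim_seq Series PSeries.
From HB Require Import structures.
From mathcomp Require Import all_boot all_fingroup zify.
From Stdlib Require Import Reals Lra.

Set Implicit Arguments.
Unset Strict Implicit.
Unset Printing Implicit Defensive.

(* Real sums and products as commutative monoid laws, so that the generic
   big-operator lemmas apply to the sums in [W] and products in [qfact]. *)
HB.instance Definition _ := Monoid.isComLaw.Build R 0%R Rplus
  (fun a b c => esym (Rplus_assoc a b c)) Rplus_comm Rplus_0_l.
HB.instance Definition _ := Monoid.isComLaw.Build R 1%R Rmult
  (fun a b c => esym (Rmult_assoc a b c)) Rmult_comm Rmult_1_l.

Lemma sumR_mull (I : finType) (P : pred I) (F : I -> R) (c : R) :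
  (\big[Rplus/0%R]_(i | P i) F i * c = \big[Rplus/0%R]_(i | P i) (F i * c))%R.
Proof. exact: (big_morph _ (fun x y => Rmult_plus_distr_r x y c) (Rmult_0_l c)). Qed.

Lemma sumR_mulr (I : finType) (P : pred I) (F : I -> R) (c : R) :
  (c * \big[Rplus/0%R]_(i | P i) F i = \big[Rplus/0%R]_(i | P i) (c * F i))%R.
Proof. exact: (big_morph _ (Rmult_plus_distr_l c) (Rmult_0_r c)). Qed.

(* Every t : 'S_n.+1 is [lift_perm ord_max v s] for a unique pair (v, s):
   v = t ord_max is the last value and s is t with its last entry removed and
   the values above v shifted down. *)
Section DropLast.
Variable n : nat.

Definition drop_last_fun (t : 'S_n.+1) (k : 'I_n) : 'I_n :=
  odflt k (unlift (t ord_max) (t (lift ord_max k))).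

Lemma drop_last_funK (t : 'S_n.+1) (k : 'I_n) :
  lift (t ord_max) (drop_last_fun t k) = t (lift ord_max k).
Proof.
rewrite /drop_last_fun; have := neq_lift ord_max k.
by rewrite -(inj_eq (@perm_inj _ t)) => /unlift_some[k' -> ->].
Qed.

Lemma drop_last_fun_inj (t : 'S_n.+1) : injective (drop_last_fun t).
Proof.
move=> k1 k2 e; apply: (@lift_inj _ ord_max); apply: (@perm_inj _ t).
by rewrite -!drop_last_funK e.
Qed.

Definition drop_last (t : 'S_n.+1) : 'S_n := perm (@drop_last_fun_inj t).

Lemma drop_lastE (t : 'S_n.+1) (k : 'I_n) : drop_last t k = drop_last_fun t k.
Proof. exact: permE. Qed.

Lemma drop_lastK (t : 'S_n.+1) : lift_perm ord_max (t ord_max) (drop_last t) = t.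
Proof.
apply/permP => k; case: (unliftP ord_max k) => [k'|] ->.
  by rewrite lift_perm_lift drop_lastE drop_last_funK.
by rewrite lift_perm_id.
Qed.

Lemma drop_last_lift (v : 'I_n.+1) (s : 'S_n) :
  drop_last (lift_perm ord_max v s) = s.
Proof.
apply/permP => k; apply: (@lift_inj _ (lift_perm ord_max v s ord_max)).
by rewrite drop_lastE drop_last_funK lift_perm_lift lift_perm_id.
Qed.

Lemma sum_perm_last (F : 'S_n.+1 -> R) :
  \big[Rplus/0%R]_(t : 'S_n.+1) F t =
  \big[Rplus/0%R]_(v : 'I_n.+1) \big[Rplus/0%R]_(s : 'S_n) F (lift_perm ord_max v s).
Proof.
rewrite pair_bigA /= (reindex (fun p : 'I_n.+1 * 'S_n => lift_perm ord_max p.1 p.2)) //=.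
exists (fun t : 'S_n.+1 => (t ord_max, drop_last t)) => [[v s] _ | t _] /=.
  by rewrite lift_perm_id drop_last_lift.
exact: drop_lastK.
Qed.

End DropLast.

Lemma ltn_lift (n : nat) (v : 'I_n.+1) (a b : 'I_n) :
  (lift v a < lift v b) = (a < b).
Proof. by rewrite /= !ltnNge leq_bump2. Qed.

Lemma lift_ord_max (n : nat) (i : 'I_n) : lift ord_max i = widen_ord (leqnSn n) i.
Proof. by apply: val_inj; rewrite /= /bump leqNgt ltn_ord. Qed.

Lemma inv_sum (n : nat) (s : 'S_n) :
  Defs.inv s = \sum_(i < n) \sum_(j < n) ((i < j) && (s j < s i)).
Proof.
rewrite /Defs.inv cardsE -sum1_card big_mkcond /= pair_big /=.
by apply: eq_bigr => p _; rewrite -topredE /=; case: (_ && _).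
Qed.

Lemma count_ord_geq (n v : nat) : \sum_(x < n) (v <= x) = n - v.
Proof.
elim: n => [|n IH]; first by rewrite big_ord0.
by rewrite big_ord_recr /= IH; case: (leqP v n) => h /=; lia.
Qed.

(* Appending the value v creates one inversion with each earlier entry above
   v, that is n - v new inversions, and keeps the old ones. *)
Lemma inv_lift_perm (n : nat) (v : 'I_n.+1) (s : 'S_n) :
  Defs.inv (lift_perm ord_max v s) = Defs.inv s + (n - v).
Proof.
rewrite !inv_sum big_ord_recr /= [X in _ + X]big1 ?addn0; last first.
  by move=> j _; rewrite ltnNge leq_ord.
rewrite -(count_ord_geq n v) [X in _ = _ + X](reindex_inj (@perm_inj _ s)) /=.
rewrite -big_split /=; apply: eq_bigr => i _.
rewrite big_ord_recr /= -lift_ord_max lift_perm_lift lift_perm_id; congr (_ + _).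
  by apply: eq_bigr => j _; rewrite -lift_ord_max lift_perm_lift ltn_lift.
by rewrite ltn_ord /= /bump; case: (leqP v (s i)) => h; lia.
Qed.

Definition nlrmax_from (n k : nat) (s : 'S_n) : nat :=
  \sum_(i < n) ((k <= i) && lrmax s i).

Lemma lrmax_lift_perm (n : nat) (v : 'I_n.+1) (s : 'S_n) (i : 'I_n) :
  lrmax (lift_perm ord_max v s) (lift ord_max i) = lrmax s i.
Proof.
rewrite /lrmax; apply/forallP/forallP => H x.
  by have := H (lift ord_max x); rewrite !lift_perm_lift !ltn_lift.
case: (unliftP ord_max x) => [x'|] ->; last first.
  by rewrite lift_ord_max /= ltnNge (ltnW (ltn_ord i)).
by have := H x'; rewrite !lift_perm_lift !ltn_lift.
Qed.

Lemma lrmax_last (n : nat) (v : 'I_n.+1) (s : 'S_n) :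
  lrmax (lift_perm ord_max v s) ord_max = (v == ord_max).
Proof.
rewrite /lrmax; apply/forallP/eqP => [H | -> x]; last first.
  case: (unliftP ord_max x) => [x'|] ->; last by rewrite ltnn.
  by rewrite lift_perm_lift lift_perm_id !lift_ord_max /= !ltn_ord.
apply: val_inj; apply/eqP; rewrite /= eqn_leq -ltnS ltn_ord leqNgt; apply/negP => hv.
have := H (lift ord_max ((s^-1)%g (Ordinal hv))).
by rewrite lift_perm_lift lift_perm_id permKV lift_ord_max /= ltn_ord /bump leqnn; lia.
Qed.

Lemma nlrmax_from_lift (n k : nat) (v : 'I_n.+1) (s : 'S_n) : k <= n ->
  nlrmax_from k (lift_perm ord_max v s) = nlrmax_from k s + (v == ord_max).
Proof.
move=> le_kn; rewrite /nlrmax_from big_ord_recr /= le_kn lrmax_last; congr (_ + _).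
by apply: eq_bigr => i _; rewrite -lift_ord_max lrmax_lift_perm.
Qed.

Lemma nlrmax_from_top (n : nat) (s : 'S_n) : nlrmax_from n s = 0.
Proof. by rewrite /nlrmax_from big1 // => i _; rewrite leqNgt ltn_ord. Qed.

Section ArgMax.
Variables (n : nat) (s : 'S_n.+1).
Let p := (s^-1)%g ord_max.

Lemma lrmax_argmax : lrmax s p.
Proof.
apply/forallP => i; apply/implyP => lt_ip; rewrite permKV /=.
have : s i != ord_max by rewrite -(permKV s ord_max) (inj_eq perm_inj) neq_ltn lt_ip.
by rewrite -val_eqE /= => ne; have := ltn_ord (s i); lia.
Qed.

Lemma not_lrmax_after_argmax (i : 'I_n.+1) : p < i -> ~~ lrmax s i.
Proof.
move=> lt_pi; apply/negP => /forallP /(_ p) /implyP /(_ lt_pi).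
by rewrite permKV ltnNge leq_ord.
Qed.

(* Hence s is k-winnable iff the maximum sits at a position >= k and is the
   only left-to-right maximum from position k on. *)
Lemma winnable_nlrmaxS (k : nat) : winnable k s = (nlrmax_from k s == 1).
Proof.
have top_iff (j : 'I_n.+1) : (nat_of_ord (s j) == n.+1.-1) = (j == p).
  by rewrite -(inj_eq (@perm_inj _ s)) permKV -val_eqE.
case: (leqP k p) => [le_kp | lt_pk]; last first.
  rewrite /nlrmax_from big1 => [|i _]; last first.
    case: (leqP k i) => //= le_ki.
    by rewrite (negbTE (not_lrmax_after_argmax (leq_trans lt_pk le_ki))).
  apply/existsP => -[j /and4P [le_kj _ top_j _]].
  by move: top_j le_kj; rewrite top_iff => /eqP ->; lia.
rewrite /nlrmax_from (bigD1 p) //= le_kp lrmax_argmax add1n eqSS sum_nat_eq0.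
apply/existsP/forallP => [[j /and4P [le_kj _ top_j before_j]] i | none_but_p].
  move: top_j; rewrite top_iff => /eqP ej; subst j.
  apply/implyP => ne_ip; case: (leqP k i) => //= le_ki.
  case: (ltngtP i p) => [lt_ip | lt_pi | /val_inj eip]; last by rewrite eip eqxx in ne_ip.
    by have := forallP before_j i; rewrite le_ki lt_ip => /negbTE ->.
  by rewrite (negbTE (not_lrmax_after_argmax lt_pi)).
exists p; rewrite le_kp lrmax_argmax top_iff eqxx /=.
apply/forallP => i; apply/implyP => /andP [le_ki lt_ip].
by have := none_but_p i; rewrite neq_ltn lt_ip le_ki /= eqb0.
Qed.

End ArgMax.

Lemma winnable_nlrmax (n k : nat) (s : 'S_n) : winnable k s = (nlrmax_from k s == 1).
Proof.
case: n s => [|n] s; last exact: winnable_nlrmaxS.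
by rewrite /winnable /nlrmax_from big_ord0; apply/existsP => -[[]].
Qed.

Lemma qint_S (m : nat) (th : R) : qint m.+1 th = (1 + th * qint m th)%R.
Proof. by rewrite /qint big_ord_recl /= sumR_mulr. Qed.

Lemma qfact_S (n : nat) (th : R) : qfact n.+1 th = (qfact n th * qint n.+1 th)%R.
Proof. by rewrite /qfact big_nat_recr. Qed.

(* θ·[n] is the generating function of the n - v new inversions, v < n. *)
Lemma qint_rev (n : nat) (th : R) :
  (th * qint n th)%R = \big[Rplus/0%R]_(v < n) (th ^ (n - v))%R.
Proof.
rewrite /qint sumR_mulr (reindex_inj rev_ord_inj) /=; apply: eq_bigr => i _.
by rewrite -[n - i](subnSK (ltn_ord i)).
Qed.

Definition lrsum (n k : nat) (f : nat -> R) (th : R) : R :=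
  \big[Rplus/0%R]_(s : 'S_n) (f (nlrmax_from k s) * th ^ Defs.inv s)%R.

(* Splitting by the last value: a non-maximal last value v contributes the
   factor θ^(n-v); the maximal one adds a left-to-right maximum. *)
Lemma lrsum_S (n k : nat) (f : nat -> R) (th : R) : k <= n ->
  lrsum n.+1 k f th =
  (lrsum n k f th * (th * qint n th) + lrsum n k (fun c => f c.+1) th)%R.
Proof.
move=> le_kn; rewrite /lrsum sum_perm_last big_ord_recr /=; congr (_ + _)%R.
  rewrite qint_rev sumR_mulr; apply: eq_bigr => v _; rewrite sumR_mull.
  apply: eq_bigr => s _; rewrite nlrmax_from_lift // inv_lift_perm pow_add.
  have -> : (widen_ord (leqnSn n) v == ord_max) = false.
    by apply/negbTE; rewrite neq_ltn /= ltn_ord.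
  by rewrite addn0 Rmult_assoc.
by apply: eq_bigr => s _; rewrite nlrmax_from_lift // inv_lift_perm eqxx subnn addn0 addn1.
Qed.

Lemma lrsum_const1 (n k : nat) (th : R) : lrsum n k (fun=> 1%R) th = qfact n th.
Proof.
have -> : lrsum n k (fun=> 1%R) th = lrsum n 0 (fun=> 1%R) th by [].
elim: n => [|n IH].
  rewrite /lrsum /qfact big_geq // (big_pred1 1%g) => [|s]; last first.
    by apply/esym/eqP/permP => -[].
  by rewrite inv_sum big_ord0 Rmult_1_l.
by rewrite (lrsum_S _ _ (leq0n n)) qfact_S IH qint_S; ring.
Qed.

Lemma lrsum_top (n : nat) (f : nat -> R) (th : R) :
  lrsum n n f th = (f 0%nat * qfact n th)%R.
Proof.
rewrite -(lrsum_const1 n n) /lrsum sumR_mulr; apply: eq_bigr => s _.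
by rewrite nlrmax_from_top Rmult_1_l.
Qed.

Definition indic (t c : nat) : R := if c == t then 1%R else 0%R.

Lemma W_lrsum (n k : nat) (th : R) : W n k th = lrsum n k (indic 1) th.
Proof.
rewrite /W /lrsum big_mkcond; apply: eq_bigr => s _.
by rewrite winnable_nlrmax /indic; case: ifP => _; ring.
Qed.

Lemma lrsum0_S (n k : nat) (th : R) : k <= n ->
  lrsum n.+1 k (indic 0) th = (lrsum n k (indic 0) th * (th * qint n th))%R.
Proof.
move=> le_kn; rewrite lrsum_S // [X in (_ + X)%R]big1 ?Rplus_0_r // => s _.
by rewrite /indic Rmult_0_l.
Qed.

Lemma lrsum1_S (n k : nat) (th : R) : k <= n ->
  lrsum n.+1 k (indic 1) th =
  (lrsum n k (indic 1) th * (th * qint n th) + lrsum n k (indic 0) th)%R.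
Proof. by move=> le_kn; rewrite lrsum_S. Qed.

Local Open Scope R_scope.

(* The terms (n+1)θ^n of the derivative of the geometric series tend to 0:
   that power series has radius of convergence 1. *)
Lemma succ_mul_pow_cv0 (th : R) : Rabs th < 1 -> Un_cv (fun n => INR n.+1 * th ^ n) 0.
Proof.
move=> hth; apply/Lim_seq.is_lim_seq_Reals.
have radius : PSeries.CV_radius (fun=> 1) = Rbar.Finite 1.
  rewrite (PSeries.CV_radius_finite_DAlembert _ 1) ?Rinv_1 //; try (move=> *; lra).
  apply: (Lim_seq.is_lim_seq_ext (fun=> 1)); last exact: Lim_seq.is_lim_seq_const.
  by move=> n; rewrite /Rdiv Rinv_1 Rmult_1_l Rabs_R1.
have inside : Rbar.Rbar_lt (Rbar.Finite (Rabs th))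
                (PSeries.CV_radius (PSeries.PS_derive (fun=> 1))).
  by rewrite PSeries.CV_radius_derive radius.
apply/Lim_seq.is_lim_seq_abs_0/Series.ex_series_lim_0.
apply: Series.ex_series_ext (PSeries.CV_disk_inside _ _ inside) => n.
by rewrite /PSeries.PS_derive Rmult_1_r.
Qed.

Lemma Un_cv_const (c : R) : Un_cv (fun=> c) c.
Proof. by apply/Lim_seq.is_lim_seq_Reals; exact: Lim_seq.is_lim_seq_const. Qed.

Lemma pow_cv0 (th : R) : Rabs th < 1 -> Un_cv (pow th) 0.
Proof. by move=> hth; apply/Lim_seq.is_lim_seq_Reals; exact: Lim_seq.is_lim_seq_geom. Qed.

Section MallowsRecursion.
Variable th : R.
Hypothesis th_gt0 : 0 < th.
Hypothesis th_lt1 : th < 1.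

Lemma qint_Sr (m : nat) : qint m.+1 th = qint m th + th ^ m.
Proof. by rewrite /qint big_ord_recr. Qed.

Lemma qint_ge0 (m : nat) : 0 <= qint m th.
Proof.
elim: m => [|m IH]; first by rewrite /qint big_ord0; lra.
by rewrite qint_Sr; have := pow_le th m (Rlt_le _ _ th_gt0); lra.
Qed.

Lemma qint_ge1 (m : nat) : 1 <= qint m.+1 th.
Proof. by rewrite qint_S; have := qint_ge0 m; nra. Qed.

Lemma qint_closed (m : nat) : qint m th * (1 - th) = 1 - th ^ m.
Proof.
elim: m => [|m IH]; first by rewrite /qint big_ord0 /=; ring.
by rewrite qint_Sr /=; nra.
Qed.

Lemma qfact_pos (n : nat) : 0 < qfact n th.
Proof.
elim: n => [|n IH]; first by rewrite /qfact big_geq //; lra.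
by rewrite qfact_S; have := qint_ge1 n; nra.
Qed.

(* The coefficients of the normalized recursion: dividing A_t(m+1) by
   [m+1]! = [m]![m+1] turns the factor θ·[m] into ρ_m and A_0(m) into σ_m. *)
Definition rho (m : nat) : R := th * qint m th / qint m.+1 th.
Definition sig (m : nat) : R := / qint m.+1 th.

Lemma rho_sig (m : nat) : rho m = 1 - sig m.
Proof. by rewrite /rho /sig; have := qint_ge1 m; rewrite qint_S => ?; field; lra. Qed.

Lemma sig_range (m : nat) : 0 <= sig m <= 1.
Proof.
have := qint_ge1 m; rewrite /sig => ?; split; first by apply/Rlt_le/Rinv_0_lt_compat; lra.
by rewrite -Rinv_1; apply: Rinv_le_contravar; lra.
Qed.

Lemma rho_range (m : nat) : 0 <= rho m <= th.
Proof.
have q_ge0 := qint_ge0 m; have q1_ge1 := qint_ge1 m.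
have q_le_q1 : qint m th <= qint m.+1 th.
  by rewrite qint_Sr; have := pow_le th m (Rlt_le _ _ th_gt0); lra.
rewrite /rho /Rdiv; split.
  by apply: Rmult_le_pos; [nra | apply/Rlt_le/Rinv_0_lt_compat; lra].
apply: (Rmult_le_reg_r (qint m.+1 th)); first lra.
by rewrite Rmult_assoc Rinv_l; nra.
Qed.

(* σ_m = (1-θ)/(1-θ^(m+1)) → 1-θ, with error σ_m θ^(m+1) <= θ^m. *)
Lemma sig_cv : Un_cv sig (1 - th).
Proof.
have th_abs : Rabs th < 1 by rewrite Rabs_right; lra.
move=> eps eps_gt0; have [M HM] := pow_cv0 th_abs eps_gt0.
exists M => m le_Mm; have pow_ge0 := pow_le th m (Rlt_le _ _ th_gt0).
have := HM m le_Mm; rewrite /R_dist !Rminus_0_r Rabs_right; last lra.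
have err : sig m - (1 - th) = sig m * th ^ m.+1.
  by have := qint_closed m.+1; have := qint_ge1 m; rewrite /sig => ? ?; field_simplify_eq; nra.
have [sig_ge0 sig_le1] := sig_range m.
have err_bound : 0 <= sig m * th ^ m.+1 <= th ^ m.
  split; first by apply: Rmult_le_pos => //; apply: pow_le; lra.
  rewrite -tech_pow_Rmult -Rmult_assoc -{2}(Rmult_1_l (th ^ m)).
  by apply: Rmult_le_compat_r => //; nra.
by rewrite err Rabs_right; lra.
Qed.

Lemma rho_cv : Un_cv rho th.
Proof.
apply: (Un_cv_ext (fun m => 1 - sig m)) => [m|]; first by rewrite rho_sig.
by have := CV_minus _ _ _ _ (Un_cv_const 1) sig_cv; rewrite (_ : 1 - (1 - th) = th) //; ring.
Qed.

(* Mallows probabilities that a permutation of size k + j has no, resp.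
   exactly one, left-to-right maximum at positions >= k. *)
Definition p_none (k j : nat) : R := lrsum (k + j) k (indic 0) th / qfact (k + j) th.
Definition p_one (k j : nat) : R := lrsum (k + j) k (indic 1) th / qfact (k + j) th.

Lemma P_p_one (k j : nat) : P (k + j) k th = p_one k j.
Proof. by rewrite /P W_lrsum. Qed.

Lemma p_none0 (k : nat) : p_none k 0 = 1.
Proof. by rewrite /p_none addn0 lrsum_top /indic /=; have := qfact_pos k; move=> ?; field; lra. Qed.

Lemma p_one0 (k : nat) : p_one k 0 = 0.
Proof. by rewrite /p_one addn0 lrsum_top /indic /= Rmult_0_l /Rdiv Rmult_0_l. Qed.

Lemma p_noneS (k j : nat) : p_none k j.+1 = p_none k j * rho (k + j).
Proof.
rewrite /p_none /rho addnS lrsum0_S ?leq_addr // qfact_S.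
by have := qfact_pos (k + j); have := qint_ge1 (k + j); move=> ? ?; field; lra.
Qed.

Lemma p_oneS (k j : nat) :
  p_one k j.+1 = p_one k j * rho (k + j) + p_none k j * sig (k + j).
Proof.
rewrite /p_one /p_none /rho /sig addnS lrsum1_S ?leq_addr // qfact_S.
by have := qfact_pos (k + j); have := qint_ge1 (k + j); move=> ? ?; field; lra.
Qed.

Lemma p_none_range (k j : nat) : 0 <= p_none k j <= th ^ j.
Proof.
elim: j => [|j IH]; first by rewrite p_none0 /=; lra.
rewrite p_noneS /= Rmult_comm; have := rho_range (k + j).
by split; [apply: Rmult_le_pos | apply: Rmult_le_compat]; lra.
Qed.

Lemma p_one_ge0 (k j : nat) : 0 <= p_one k j.
Proof.
elim: j => [|j IH]; first by rewrite p_one0; lra.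
have := rho_range (k + j); have := sig_range (k + j); have := p_none_range k j.
by rewrite p_oneS; nra.
Qed.

Lemma p_one_le (k j : nat) : p_one k j.+1 <= INR j.+1 * th ^ j.
Proof.
elim: j => [|j IH].
  by rewrite p_oneS p_one0 p_none0 addn0; have := sig_range k; rewrite /=; lra.
have [rho_ge0 rho_le] := rho_range (k + j.+1).
have [sig_ge0 sig_le1] := sig_range (k + j.+1).
have [none_ge0 none_le] := p_none_range k j.+1.
have old : p_one k j.+1 * rho (k + j.+1) <= INR j.+1 * th ^ j * th.
  by apply: Rmult_le_compat => //; exact: p_one_ge0.
have new : p_none k j.+1 * sig (k + j.+1) <= th ^ j.+1.
  by rewrite -[X in _ <= X]Rmult_1_r; apply: Rmult_le_compat.
rewrite p_oneS [INR j.+2]S_INR -tech_pow_Rmult; rewrite -tech_pow_Rmult in new; lra.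
Qed.

Lemma p_one_unif_small (eps : R) : 0 < eps ->
  exists M : nat, forall k j : nat, (M < j)%nat -> p_one k j < eps.
Proof.
move=> eps_gt0; have th_abs : Rabs th < 1 by rewrite Rabs_right; lra.
have [M HM] := succ_mul_pow_cv0 th_abs eps_gt0.
exists M => k [|j] // /ltnSE le_Mj.
apply: Rle_lt_trans (p_one_le k j) _.
have := HM j (leP le_Mj); rewrite /R_dist Rminus_0_r Rabs_right //.
by apply/Rle_ge/Rmult_le_pos; [exact: pos_INR | apply: pow_le; lra].
Qed.

Lemma p_none_cv (j : nat) : Un_cv (fun k => p_none k j) (th ^ j).
Proof.
elim: j => [|j IH].
  by apply: (Un_cv_ext (fun=> 1)) (Un_cv_const 1) => k; rewrite p_none0.
apply: (Un_cv_ext (fun k => p_none k j * rho (k + j))) => [k|]; first by rewrite p_noneS.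
by rewrite /= Rmult_comm; apply: CV_mult IH (CV_shift' _ _ _ rho_cv).
Qed.

Lemma p_one_cv_S (j : nat) (l : R) : Un_cv (fun k => p_one k j) l ->
  Un_cv (fun k => p_one k j.+1) (l * th + th ^ j * (1 - th)).
Proof.
move=> cv_j.
apply: (Un_cv_ext (fun k => p_one k j * rho (k + j) + p_none k j * sig (k + j))) => [k|].
  by rewrite p_oneS.
apply: CV_plus; apply: CV_mult => //.
- exact: CV_shift' _ _ _ rho_cv.
- exact: p_none_cv.
- exact: CV_shift' _ _ _ sig_cv.
Qed.

Lemma p_one_cv (j : nat) : Un_cv (fun k => p_one k j.+1) (INR j.+1 * th ^ j * (1 - th)).
Proof.
elim: j => [|j IH].
  have p_one0_cv : Un_cv (fun k => p_one k 0) 0.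
    by apply: (Un_cv_ext (fun=> 0)) (Un_cv_const 0) => k; rewrite p_one0.
  rewrite (_ : INR 1 * th ^ 0 * (1 - th) = 0 * th + th ^ 0 * (1 - th)) /=; last ring.
  exact: p_one_cv_S p_one0_cv.
rewrite (_ : INR j.+2 * th ^ j.+1 * (1 - th) =
             INR j.+1 * th ^ j * (1 - th) * th + th ^ j.+1 * (1 - th)).
  exact: p_one_cv_S IH.
by rewrite [INR j.+2]S_INR /=; ring.
Qed.

End MallowsRecursion.

(* y e^(-y) <= e^(-1) for all real y, since e^(y-1) >= 1 + (y - 1). *)
Lemma mul_exp_opp_le (y : R) : y * exp (- y) <= exp (-1).
Proof.
have e : exp (- y) * exp (y - 1) = exp (-1) by rewrite -exp_plus; congr exp; ring.
have := exp_ineq1_le (y - 1); have := exp_pos (- y); nra.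
Qed.

Lemma exp_peak (c x : R) : 0 < c -> 1 <= x ->
  x * exp (- c * (x - 1)) <= Rmax (/ c) 1 * exp (- c * (Rmax (/ c) 1 - 1)).
Proof.
move=> c_gt0 x_ge1; have ec_pos := exp_pos c.
case: (Rle_lt_dec c 1) => [c_le1 | c_gt1].
  rewrite Rmax_left; last by rewrite -Rinv_1; apply: Rinv_le_contravar.
  have -> : exp (- c * (x - 1)) = exp c * exp (- (c * x)).
    by rewrite -exp_plus; congr exp; ring.
  have -> : exp (- c * (/ c - 1)) = exp c * exp (-1).
    by rewrite -exp_plus; congr exp; field; lra.
  have -> : x * (exp c * exp (- (c * x))) = / c * exp c * (c * x * exp (- (c * x))).
    by field; lra.
  have : 0 < / c * exp c by apply: Rmult_lt_0_compat => //; apply: Rinv_0_lt_compat.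
  have := mul_exp_opp_le (c * x); nra.
rewrite Rmax_right; last by rewrite -Rinv_1; apply/Rlt_le/Rinv_lt_contravar; lra.
rewrite Rminus_diag Rmult_0_r exp_0 Rmult_1_r.
have inv_exp : exp (- c * (x - 1)) * exp (c * (x - 1)) = 1.
  by rewrite -exp_plus -exp_0; congr exp; ring.
have x_le : x <= exp (c * (x - 1)) by have := exp_ineq1_le (c * (x - 1)); nra.
have := exp_pos (- c * (x - 1)); nra.
Qed.

(* Part 3: with c = -ln θ, g(x) = x e^(-c(x-1)) (1-θ); its maximizer is
   max(1/c, 1), and for θ > 1/e (i.e. c < 1) the maximum is e^(c-1)(1-θ)/c. *)
Lemma best_position_peak (th : R) : 0 < th -> th < 1 ->
  let g := fun x : R => x * Rpower th (x - 1) * (1 - th) in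
  let jstar := Rmax (- 1 / ln th) 1 in
  (1 <= jstar /\ (forall x : R, 1 <= x -> g x <= g jstar)) /\
  (1 / exp 1 < th -> g jstar = exp (-1) * ((th - 1) / (th * ln th))).
Proof.
move=> th_gt0 th_lt1 g jstar.
have ln_neg : ln th < 0 by rewrite -ln_1; apply: ln_increasing; lra.
pose c := - ln th.
have c_gt0 : 0 < c by rewrite /c; lra.
have jstarE : jstar = Rmax (/ c) 1 by rewrite /jstar /c; congr Rmax; field; lra.
have gE (x : R) : g x = x * exp (- c * (x - 1)) * (1 - th).
  by rewrite /g /Rpower /c; congr (_ * exp _ * _); ring.
split; [split|].
- exact: Rmax_r.
- move=> x x_ge1; rewrite !gE jstarE; apply: Rmult_le_compat_r; first lra.
  exact: exp_peak.
move=> th_gt_inv_e; rewrite /Rdiv Rmult_1_l in th_gt_inv_e.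
have c_lt1 : c < 1.
  have : ln (/ exp 1) < ln th.
    by apply: ln_increasing; [apply: Rinv_0_lt_compat; exact: exp_pos | lra].
  by rewrite ln_Rinv ?ln_exp /c; [lra | exact: exp_pos].
have exp_c : exp c = / th by rewrite /c -ln_Rinv // exp_ln //; apply: Rinv_0_lt_compat.
rewrite gE jstarE Rmax_left; last by rewrite -Rinv_1; apply/Rlt_le/Rinv_lt_contravar; lra.
have -> : - c * (/ c - 1) = -1 + c by field; lra.
by rewrite exp_plus exp_c /c; field; lra.
Qed.

Local Close Scope R_scope.

Unset Implicit Arguments.

Theorem theorem6p5 (theta : R) (h0 : (0 < theta)%R) (h1 : (theta < 1)%R) :
  (* 1. *)
  (forall j : nat, (1 <= j)%N ->
     Un_cv (fun N => P N (N - j) theta)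
           (INR j * theta ^ (j - 1) * (1 - theta))%R)
  /\
  (* 2. *)
  (forall kN : nat -> nat,
     (forall N : nat, (1 <= N)%N -> (kN N <= N - 1)%N) ->
     (forall M : nat, exists N0 : nat, forall N : nat,
          (N0 <= N)%N -> (M <= N - kN N)%N) ->
     Un_cv (fun N => P N (kN N) theta) 0%R)
  /\
  (* 3. *)
  (let g := fun x : R => (x * Rpower theta (x - 1) * (1 - theta))%R in
   let jstar := Rmax (- 1 / ln theta) 1 in
   ((1 <= jstar)%R /\ (forall x : R, (1 <= x)%R -> (g x <= g jstar)%R)) /\
   ((1 / exp 1 < theta)%R ->
      g jstar = (exp (-1) * ((theta - 1) / (theta * ln theta)))%R)).
Proof.
split; [|split]; last exact: best_position_peak.
- (* P (n + j) n = p_one n j, whose limit in n is known. *)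
  move=> [|j] // _; apply: (CV_shift _ j.+1); rewrite subSS subn0.
  apply: (Un_cv_ext (fun n => p_one theta n j.+1)) (p_one_cv h0 h1 j) => n.
  by rewrite addnK P_p_one.
- (* P N (kN N) = p_one (kN N) (N - kN N), small once N - kN N is large. *)
  move=> kN kN_le kN_far eps eps_gt0.
  have [M small] := p_one_unif_small h0 h1 eps_gt0.
  have [N0 far] := kN_far M.+1.
  exists (maxn N0 1) => N /leP; rewrite geq_max => /andP [le_N0N le_1N].
  have le_kN : kN N <= N by have := kN_le N le_1N; lia.
  rewrite /R_dist Rminus_0_r -{1}(subnKC le_kN) P_p_one Rabs_right.
    exact: small (far N le_N0N).
  exact/Rle_ge/p_one_ge0.
Qed.
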